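(* Assume every node of $G$ belongs to at least one $h$-clique, and let $f^*$ be any maximum flow in $\mathcal{H}$. For an independent component set $\mathcal{C}$ define $g(\mathcal{C})=\mathcal{C}\cup des(\mathcal{C})$. Then $g$ is a bijection from the family of independent component sets onto the family of d-closed component sets.
   Context: Let $G=(V,E)$ be a finite simple undirected graph and $h\ge2$. An $h$-clique is a set of $h$ pairwise adjacent nodes; $\mu_h(G[W])$ counts $h$-cliques inside $W$; for nonempty $W$, $\rho_h(W)=\mu_h(G[W])/|W|$; $\rho_h^*=\max_{\emptyset\ne W\subseteq V}\rho_h(W)$; $deg_G(v,h)$ is the number of $h$-cliques containing $v$; $\Lambda$ is the set of $(h-1)$-cliques of $G$ contained in some $h$-clique. Flow network $\mathcal{H}=(V_\mathcal{H},E_\mathcal{H},c)$: $V_\mathcal{H}=V\cup\Lambda\cup\{s,t\}$; for $v\in V$: arcs $(s,v)$ cap. $deg_G(v,h)$, $(v,t)$ cap. $h\rho_h^*$, $(v,s),(t,v)$ cap. $0$; for $\lambda\in\Lambda$, $v\in\lambda$: $(\lambda,v)$ cap. $+\infty$, $(v,\lambda)$ cap. $0$; for $\lambda\in\Lambda$, $v\in V$ with $\lambda\cup\{v\}$ an $h$-clique: $(v,\lambda)$ cap. $1$, $(\lambda,v)$ cap. $0$; no other arcs. A flow $f$ satisfies $f(u,v)\le c(u,v)$, $f(v,u)=-f(u,v)$, conservation at nodes other than $s,t$. The residual graph $\mathcal{H}_{f}$ has an arc $(u,v)$ whenever $(u,v)\in E_\mathcal{H}$ and $c(u,v)-f(u,v)>0$.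 The condensation $\mathcal{H}^C$ has the SCCs of $\mathcal{H}_{f^*}$ as nodes, with an arc $C\to C'$ ($C\ne C'$) whenever $\mathcal{H}_{f^*}$ has an arc from a node of $C$ to a node of $C'$. A non-trivial component is an SCC containing neither $s$ nor $t$. For a non-trivial component $C$, $des(C)$ (resp. $anc(C)$) is the set of non-trivial components $C'$ such that $\mathcal{H}^C$ has a directed path of length $\ge1$ from $C$ to $C'$ (resp. from $C'$ to $C$); for a set $\mathcal{C}$, $des(\mathcal{C})=\bigcup_{C\in\mathcal{C}}des(C)$. An independent component set is a set $\mathcal{C}$ of non-trivial components with $C\cap V\neq\emptyset$ for all $C\in\mathcal{C}$ and $C_1\notin des(C_2)$ for all $C_1,C_2\in\mathcal{C}$. A d-closed component set is a set $\mathcal{C}$ of non-trivial components such that every $C\in\mathcal{C}$ with $C\cap V=\emptyset$ has an incoming arc in $\mathcal{H}^C$ from some $C'\in\mathcal{C}$, and $des(\mathcal{C})\subseteq\mathcal{C}$. *)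

From HB Require Import structures.
From mathcomp Require Import all_boot all_order all_algebra.
From mathcomp Require Import reals.
Set Implicit Arguments.
Unset Strict Implicit.
Unset Printing Implicit Defensive.
Import Order.TTheory GRing.Theory Num.Theory.
Local Open Scope ring_scope.

Section Graph.
Variables (T : finType) (e : rel T) (h : nat).

Definition is_clique (S : {set T}) : bool :=
  [forall x in S, forall y in S, (x != y) ==> e x y].

Definition hclique (S : {set T}) : bool := is_clique S && (#|S| == h)%N.

Definition mu (W : {set T}) : nat := #|[set S | hclique S & S \subset W]|.

Definition hdeg (v : T) : nat := #|[set S | hclique S & v \in S]|.

Definition Lambda : {set {set T}} :=
  [set L | [&& is_clique L, (#|L| == h.-1)%N & [exists S, hclique S && (L \subset S)]]].

Definition lamT := {L : {set T} | L \in Lambda}.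

Definition node : finType := ((T + lamT) + bool)%type.

Definition vtx (v : T) : node := inl (inl v).
Definition lam (L : lamT) : node := inl (inr L).
Definition src : node := inr true.
Definition snk : node := inr false.

Definition isArc (u v : node) : bool :=
  match u, v with
  | inr true, inl (inl _) => true
  | inl (inl _), inr false => true
  | inl (inl _), inr true => true
  | inr false, inl (inl _) => true
  | inl (inr L), inl (inl x) => (x \in val L) || hclique (x |: val L)
  | inl (inl x), inl (inr L) => (x \in val L) || hclique (x |: val L)
  | _, _ => false
  end.

Section Real.
Variable R : realType.

Definition rho_star : R :=
  \big[Num.max/0]_(W : {set T} | W != set0) ((mu W)%:R / (#|W|)%:R).

(* capacities; None stands for +infinity; non-arcs get capacity 0 *)
Definition cap (u v : node) : option R :=
  match u, v with
  | inr true, inl (inl x) => Some (hdeg x)%:R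
  | inl (inl _), inr false => Some (h%:R * rho_star)
  | inl (inr L), inl (inl x) => if x \in val L then None else Some 0
  | inl (inl x), inl (inr L) =>
      if (x \notin val L) && hclique (x |: val L) then Some 1 else Some 0
  | _, _ => Some 0
  end.

Definition cap_le (x : R) (c : option R) : bool :=
  if c is Some c' then x <= c' else true.

Definition is_flow (f : node -> node -> R) : Prop :=
  [/\ forall u v, cap_le (f u v) (cap u v),
      forall u v, f v u = - f u v &
      forall u, u != src -> u != snk -> \sum_(w : node) f u w = 0].

Definition flow_value (f : node -> node -> R) : R := \sum_(w : node) f src w.

Definition is_max_flow (f : node -> node -> R) : Prop :=
  is_flow f /\ forall g, is_flow g -> flow_value g <= flow_value f.

Definition resid (f : node -> node -> R) : rel node := fun u v =>
  isArc u v && (if cap u v is Some c then f u v < c else true).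

End Real.

Section Components.
Variable r : rel node.

Definition scc_of (x : node) : {set node} :=
  [set y | connect r x y && connect r y x].
Definition is_scc (C : {set node}) : bool := [exists x, C == scc_of x].

Definition nontrivial (C : {set node}) : bool :=
  [&& is_scc C, src \notin C & snk \notin C].

Definition cond : rel {set node} := fun C C' =>
  [&& is_scc C, is_scc C', C != C' & [exists u in C, exists v in C', r u v]].

Definition des (C : {set node}) : {set {set node}} :=
  [set C' | nontrivial C' && [exists C'', cond C C'' && connect cond C'' C']].

Definition desS (Cs : {set {set node}}) : {set {set node}} :=
  \bigcup_(C in Cs) des C.

Definition hasV (C : {set node}) : bool := [exists v, vtx v \in C].

Definition independent (Cs : {set {set node}}) : bool :=
  [forall C in Cs, nontrivial C && hasV C] &&
  [forall C1 in Cs, forall C2 in Cs, C1 \notin des C2].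

Definition dclosed (Cs : {set {set node}}) : bool :=
  [forall C in Cs, nontrivial C &&
      (~~ hasV C ==> [exists C' in Cs, cond C' C])] &&
  (desS Cs \subset Cs).

Definition gmap (Cs : {set {set node}}) : {set {set node}} := Cs :|: desS Cs.

End Components.
End Graph.

From HB Require Import structures.
From mathcomp Require Import all_boot all_order all_algebra.
From mathcomp Require Import reals ring lra.
Set Implicit Arguments.
Unset Strict Implicit.
Unset Printing Implicit Defensive.
Import Order.TTheory GRing.Theory Num.Theory.

(* Injectivity and surjectivity hold for the condensation of any digraph: it
   is acyclic, so "C' is in des C" is a strict partial order on components.
   An independent set is recovered from its image as the members of the image
   lying below no other member, and a d-closed set Ds is the image of its own
   members lying below no other member (section Condensation).

   That g(Cs) is d-closed uses two properties of the residual graph of f*: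
   (A) t reaches every vertex node, and
   (B) if s has a residual out-arc, then s reaches t.
   Under (A) and (B) every component on a condensation path leaving a
   non-trivial component that contains a vertex is non-trivial, which gives
   every member of des(Cs) a predecessor in g(Cs) (section ImageDclosed).
   Both properties are cut arguments in the network (section Network): the
   net flow out of a node set avoiding t is the flow value or 0, and arcs that
   are missing from the residual graph are saturated.  (B) holds for every
   flow: the nodes reachable from s form a cut of capacity at least
   sum_v deg(v, h), by double counting the h-cliques inside its vertex part W
   and mu(W) <= rho* |W| (section CliqueCounting).  (A) uses maximality only
   through the positivity of the flow value, witnessed by a small flow along
   a path s -> v -> t. *)

Section CliqueCounting.
Variables (T : finType) (e : rel T) (h : nat).

Definition cliques_inside (W : {set T}) (x : T) : {set {set T}} :=
  [set K | [&& hclique e h K, x \in K & K \subset W]].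
Definition cliques_leaving (W : {set T}) (x : T) : {set {set T}} :=
  [set K | [&& hclique e h K, x \in K & ~~ (K \subset W)]].

(* Lambda-nodes not inside W that form an h-clique with x, i.e. the targets
   of the unit-capacity arcs from x that leave W. *)
Definition lambdas_leaving (W : {set T}) (x : T) : {set lamT e h} :=
  [set L : lamT e h |
    [&& ~~ (val L \subset W), x \notin val L & hclique e h (x |: val L)]].

Lemma clique_subset (K L : {set T}) : is_clique e K -> L \subset K -> is_clique e L.
Proof.
move=> /forallP cK /subsetP LK; apply/forallP=> a; apply/implyP=> aL.
apply/forallP=> b; apply/implyP=> bL.
by move: (cK a); rewrite (LK _ aL) /= => /forallP /(_ b); rewrite (LK _ bL).
Qed.

Lemma hdeg_inside_leaving (W : {set T}) (x : T) :
  (hdeg e h x <= #|cliques_inside W x| + #|cliques_leaving W x|)%N.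
Proof.
rewrite -cardsUI; apply: leq_trans (leq_addr _ _).
apply: subset_leq_card; apply/subsetP=> K; rewrite !inE => /andP[hK xK].
by rewrite hK xK /=; case: (K \subset W).
Qed.

(* K |-> K :\ x injects the cliques through x leaving W into the lambdas
   leaving W that form an h-clique with x. *)
Lemma cliques_leaving_lambdas (W : {set T}) (x : T) : x \in W ->
  (#|cliques_leaving W x| <= #|lambdas_leaving W x|)%N.
Proof.
move=> xW.
rewrite -(@card_in_imset _ _ (fun K => K :\ x) (mem (cliques_leaving W x))); last first.
  move=> K1 K2; rewrite /= !inE => /and3P[_ x1 _] /and3P[_ x2 _] eqK.
  by rewrite -(setD1K x1) -(setD1K x2) eqK.
apply: leq_trans (leq_imset_card val _).
apply: subset_leq_card; apply/subsetP=> L /imsetP[K + ->].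
rewrite inE => /and3P[hK xK nKW].
have KxL : K :\ x \in Lambda e h.
  move: (hK) => /andP[cK /eqP cardK].
  rewrite inE (clique_subset cK (subD1set _ _)) /=.
  apply/andP; split; first by rewrite -cardK (cardsD1 x K) xK.
  by apply/existsP; exists K; rewrite hK subD1set.
apply/imsetP; exists (exist _ (K :\ x) KxL) => //.
rewrite inE /= setD11 (setD1K xK) hK !andbT.
apply/negP=> sub; case/negP: nKW; rewrite -(setD1K xK).
by apply/subsetP=> y /setU1P[->|/(subsetP sub)].
Qed.

(* Double counting of the pairs (x, K) with x in K, K an h-clique inside W. *)
Lemma sum_cliques_inside (W : {set T}) :
  (\sum_(x in W) #|cliques_inside W x| = h * mu e h W)%N.
Proof.
have -> : (\sum_(x in W) #|cliques_inside W x| =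
    \sum_(x in W) \sum_(K in [set K | hclique e h K & K \subset W]) (x \in K))%N.
  apply: eq_bigr=> x _; rewrite -sum1_card big_mkcond /= [RHS]big_mkcond /=.
  apply: eq_bigr=> K _; rewrite !inE.
  by case: (hclique e h K); case: (x \in K); case: (K \subset W).
rewrite exchange_big /= /mu mulnC -sum_nat_const.
apply: eq_bigr=> K; rewrite inE => /andP[/andP[_ /eqP cK] KW].
rewrite -cK -sum1_card big_mkcond /= [RHS]big_mkcond /=.
apply: eq_bigr=> y _; case yK: (y \in K) => /=; last by case: (y \in W).
by rewrite (subsetP KW _ yK).
Qed.

Lemma mu_set0 : (0 < h)%N -> mu e h set0 = 0%N.
Proof.
move=> h_gt0; apply/eqP; rewrite cards_eq0; apply/eqP/setP=> K; rewrite !inE.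
apply/negP=> /andP[/andP[_ /eqP cK]]; rewrite subset0 => /eqP K0.
by move: cK h_gt0; rewrite K0 cards0 => <-.
Qed.

End CliqueCounting.

Section Condensation.
Variables (T : finType) (e : rel T) (h : nat) (r : rel (node e h)).
Local Notation N := (node e h).
Local Notation cnd := (cond r).

Lemma in_scc (x y : N) : (y \in scc_of r x) = connect r x y && connect r y x.
Proof. by rewrite inE. Qed.

Lemma scc_self (x : N) : x \in scc_of r x.
Proof. by rewrite in_scc connect0. Qed.

Lemma scc_eq (C : {set N}) (y : N) : is_scc r C -> y \in C -> C = scc_of r y.
Proof.
move=> /existsP[x /eqP->] /[!in_scc] /andP[xy yx].
apply/setP=> z; rewrite !in_scc; apply/andP/andP=> [[xz zx]|[yz zy]].
  by split; [apply: connect_trans yx xz | apply: connect_trans zx xy].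
by split; [apply: connect_trans xy yz | apply: connect_trans zy yx].
Qed.

Lemma scc_connect (C : {set N}) (a b : N) :
  is_scc r C -> a \in C -> b \in C -> connect r a b.
Proof. by move=> sC aC; rewrite (scc_eq sC aC) in_scc => /andP[]. Qed.

Lemma scc_nonempty (C : {set N}) : is_scc r C -> exists c, c \in C.
Proof. by case/existsP=> x /eqP->; exists x; exact: scc_self. Qed.

Lemma cond_connect (C C' : {set N}) (a b : N) :
  cnd C C' -> a \in C -> b \in C' -> connect r a b.
Proof.
case/and4P=> sC sC' _ /existsP[u /andP[uC /existsP[v /andP[vC' ruv]]]] aC bC'.
apply: connect_trans (scc_connect sC aC uC) _.
exact: connect_trans (connect1 ruv) (scc_connect sC' vC' bC').
Qed.

Lemma cond_path_connect (C C' : {set N}) (a b : N) :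
  is_scc r C -> connect cnd C C' -> a \in C -> b \in C' -> connect r a b.
Proof.
move=> sC /connectP[p]; elim: p C sC a => [|C1 p IH] C sC a /=.
  by move=> _ -> aC bC; exact: scc_connect sC aC bC.
case/andP=> cC1 pp Cl aC bC'.
have sC1 : is_scc r C1 by case/and4P: cC1.
have [c cC1'] := scc_nonempty sC1.
exact: connect_trans (cond_connect cC1 aC cC1') (IH _ sC1 c pp Cl cC1' bC').
Qed.

Lemma cond_acyclic (C C' : {set N}) : cnd C C' -> ~~ connect cnd C' C.
Proof.
move=> cC; apply/negP=> back; move: (cC).
case/and4P=> sC sC' neq /existsP[u /andP[uC /existsP[v /andP[vC' ruv]]]].
have vu := cond_path_connect sC' back vC' uC.
have vC : v \in C by rewrite (scc_eq sC uC) in_scc connect1.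
by move: neq; rewrite (scc_eq sC vC) (scc_eq sC' vC') eqxx.
Qed.

Definition cond_reach (C C' : {set N}) : bool :=
  [exists C'', cnd C C'' && connect cnd C'' C'].

Lemma in_des (C C' : {set N}) : (C' \in des r C) = nontrivial r C' && cond_reach C C'.
Proof. by rewrite inE. Qed.

Lemma des_trans (C1 C2 C3 : {set N}) :
  C2 \in des r C1 -> C3 \in des r C2 -> C3 \in des r C1.
Proof.
rewrite !in_des => /andP[_ /existsP[D /andP[c1 p1]]] /andP[-> /existsP[D' /andP[c2 p2]]].
apply/existsP; exists D; rewrite c1 /=.
exact: connect_trans p1 (connect_trans (connect1 c2) p2).
Qed.

Lemma des_irrefl (C : {set N}) : C \notin des r C.
Proof.
rewrite in_des; apply/negP=> /andP[_ /existsP[D /andP[c p]]].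
by move: (cond_acyclic c); rewrite p.
Qed.

Lemma des_card (C C' : {set N}) : C' \in des r C -> (#|des r C'| < #|des r C|)%N.
Proof.
move=> d; apply: proper_card; apply/properP; split.
  by apply/subsetP=> D dD; exact: des_trans d dD.
by exists C' => //; exact: des_irrefl.
Qed.

Lemma in_desS (Cs : {set {set N}}) (D : {set N}) :
  (D \in desS r Cs) = [exists C in Cs, D \in des r C].
Proof.
apply/bigcupP/existsP=> [[C CC DC]|[C /andP[CC DC]]]; first by exists C; rewrite CC.
by exists C.
Qed.

Lemma desS_mono (Cs Ds : {set {set N}}) : Cs \subset Ds -> desS r Cs \subset desS r Ds.
Proof.
move=> /subsetP sub; apply/subsetP=> D; rewrite !in_desS => /existsP[C /andP[CC DC]].
by apply/existsP; exists C; rewrite sub.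
Qed.

Lemma indep_recover (Cs : {set {set N}}) :
  independent r Cs -> Cs = gmap r Cs :\: desS r (gmap r Cs).
Proof.
case/andP=> _ /forallP ind; apply/setP=> C; rewrite inE [C \in gmap r Cs]inE.
apply/idP/idP=> [CC|].
  have notdes D : D \in Cs -> C \notin des r D.
    by move=> DC; move: (ind C); rewrite CC => /forallP /(_ D); rewrite DC.
  rewrite CC /= andbT in_desS; apply/existsP=> -[D /andP[]]; rewrite inE.
  case/orP=> [DC|]; first by apply/negP; exact: notdes.
  rewrite in_desS => /existsP[D0 /andP[D0C DD0]] CD.
  by move: (notdes _ D0C); rewrite (des_trans DD0 CD).
case/andP=> nd /orP[//|CD]; case/negP: nd.
move: CD; rewrite !in_desS => /existsP[D0 /andP[D0C CD0]].
by apply/existsP; exists D0; rewrite inE D0C.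
Qed.

Lemma gmap_inj (Cs1 Cs2 : {set {set N}}) : independent r Cs1 -> independent r Cs2 ->
  gmap r Cs1 = gmap r Cs2 -> Cs1 = Cs2.
Proof. by move=> i1 i2 eqg; rewrite (indep_recover i1) (indep_recover i2) eqg. Qed.

(* Every member of a finite family lies on or below a member that lies below
   no other member (take one with the most descendants). *)
Lemma exists_top_above (Ds : {set {set N}}) (D : {set N}) : D \in Ds ->
  exists2 D', D' \in Ds :\: desS r Ds & (D' == D) || (D \in des r D').
Proof.
move=> DD.
pose A := [set D' in Ds | (D' == D) || (D \in des r D')].
have AD : D \in A by rewrite inE DD eqxx.
have [D' + D'max] := @arg_maxnP _ D (fun X => X \in A) (fun X => #|des r X|) AD.
rewrite inE => /andP[D'D hD]; exists D' => //.
rewrite inE D'D andbT in_desS; apply/existsP=> -[D'' /andP[D''D D'D'']].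
have D''A : D'' \in A.
  rewrite inE D''D /=; case/orP: hD => [/eqP<-|DD']; first by rewrite D'D'' orbT.
  by rewrite (des_trans D'D'' DD') orbT.
by move: (D'max D'' D''A); rewrite /= leqNgt (des_card D'D'').
Qed.

Lemma top_independent (Ds : {set {set N}}) :
  dclosed r Ds -> independent r (Ds :\: desS r Ds).
Proof.
case/andP=> /forallP dc _; apply/andP; split.
  apply/forallP=> C; apply/implyP; rewrite inE => /andP[nd CD].
  move: (dc C); rewrite CD /= => /andP[-> /implyP hv] /=.
  apply: contraT => /hv /existsP[C' /andP[C'D c]].
  case/negP: nd; rewrite in_desS; apply/existsP; exists C'.
  rewrite C'D /= in_des; move: (dc C); rewrite CD => /andP[-> _] /=.
  by apply/existsP; exists C; rewrite c connect0.
apply/forallP=> C1; apply/implyP; rewrite inE => /andP[nd _].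
apply/forallP=> C2; apply/implyP; rewrite inE => /andP[_ C2D].
by apply: contra nd => C1C2; rewrite in_desS; apply/existsP; exists C2; rewrite C2D.
Qed.

Lemma gmap_top (Ds : {set {set N}}) :
  dclosed r Ds -> gmap r (Ds :\: desS r Ds) = Ds.
Proof.
case/andP=> _ dsub; apply/setP=> D; rewrite inE; apply/idP/idP.
  case/orP=> [/setDP[] //|DD]; apply: (subsetP dsub); apply: (subsetP (desS_mono _)) DD.
  exact: subsetDl.
move=> /exists_top_above[D' D'top /orP[/eqP<-|DD']]; first by rewrite D'top.
by apply/orP; right; rewrite in_desS; apply/existsP; exists D'; rewrite D'top.
Qed.

Lemma dclosed_surj (Ds : {set {set N}}) : dclosed r Ds ->
  exists2 Cs, independent r Cs & gmap r Cs = Ds.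
Proof. by move=> dc; exists (Ds :\: desS r Ds); [exact: top_independent | exact: gmap_top]. Qed.

Section ImageDclosed.
Hypothesis snk_reaches_vtx : forall v, connect r (snk e h) (vtx e h v).
Hypothesis src_arc_reaches_snk : forall w, r (src e h) w -> connect r (src e h) (snk e h).

(* A non-trivial component containing a vertex cannot reach t: otherwise,
   by (A), it would be the component of t. *)
Lemma vtx_component_avoids_snk (C0 : {set N}) (x0 : T) :
  nontrivial r C0 -> vtx e h x0 \in C0 -> ~~ connect r (vtx e h x0) (snk e h).
Proof.
case/and3P=> sC0 _ nt xC; apply: contra nt => cx.
by rewrite (scc_eq sC0 xC) in_scc cx snk_reaches_vtx.
Qed.

(* A component reached from such a C0 that has an outgoing condensation arc is
   non-trivial: it avoids t by the lemma above, and it avoids s since an arc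
   leaving the component of s would make s reach t by (B). *)
Lemma reached_component_nontrivial (C0 P C : {set N}) (x0 : T) :
  nontrivial r C0 -> vtx e h x0 \in C0 -> connect cnd C0 P -> cnd P C ->
  nontrivial r P.
Proof.
move=> ntC0 xC0 C0P PC.
have reach b : b \in P -> connect r (vtx e h x0) b.
  by case/and3P: ntC0 => sC0 _ _; exact: cond_path_connect sC0 C0P xC0.
have nsnk := vtx_component_avoids_snk ntC0 xC0.
move: (PC); case/and4P=> sP sC neq /existsP[u /andP[uP /existsP[v /andP[vC ruv]]]].
rewrite /nontrivial sP /=; apply/andP; split; apply/negP=> inP; last first.
  by case/negP: nsnk; exact: reach.
have vs : v != src e h.
  by apply: contra neq => /eqP vs; rewrite (scc_eq sP inP) (scc_eq sC vC) vs.
have [w sw _] : exists2 w, r (src e h) w & connect r w v.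
  have /connectP[[|w q] /= pth last_v] := connect_trans (scc_connect sP inP uP) (connect1 ruv).
    by move: vs; rewrite last_v eqxx.
  by case/andP: pth => sw qp; exists w => //; apply/connectP; exists q.
by case/negP: nsnk; exact: connect_trans (reach _ inP) (src_arc_reaches_snk sw).
Qed.

Lemma des_predecessor (C0 C : {set N}) : nontrivial r C0 -> hasV C0 ->
  C \in des r C0 -> exists2 C', (C' == C0) || (C' \in des r C0) & cnd C' C.
Proof.
move=> ntC0 /existsP[x0 xC0].
rewrite in_des => /andP[_ /existsP[C'' /andP[c0 /connectP[p]]]].
case/lastP: p => [|p' Cl] /=; first by move=> _ ->; exists C0; rewrite ?eqxx.
rewrite rcons_path last_rcons => /andP[pp' cP] ->.
set P := last C'' p' in cP.
have C''P : connect cnd C'' P by apply/connectP; exists p'.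
exists P => //; apply/orP; right; rewrite in_des.
rewrite (reached_component_nontrivial ntC0 xC0 _ cP) /=; last first.
  exact: connect_trans (connect1 c0) C''P.
by apply/existsP; exists C''; rewrite c0.
Qed.

Lemma gmap_dclosed (Cs : {set {set N}}) : independent r Cs -> dclosed r (gmap r Cs).
Proof.
move=> /andP[/forallP ntv _].
have ntC C : C \in Cs -> nontrivial r C /\ hasV C.
  by move=> CC; move: (ntv C); rewrite CC => /andP.
apply/andP; split.
  apply/forallP=> C; apply/implyP; rewrite inE => /orP[CC|].
    by have [-> ->] := ntC C CC.
  rewrite in_desS => /existsP[C0 /andP[C0C CC0]].
  move: (CC0); rewrite in_des => /andP[-> _] /=; apply/implyP=> _.
  have [n0 h0] := ntC C0 C0C.
  have [C' hC' cC'] := des_predecessor n0 h0 CC0.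
  apply/existsP; exists C'; rewrite cC' andbT inE.
  case/orP: hC' => [/eqP->|d]; first by rewrite C0C.
  by rewrite in_desS; apply/orP; right; apply/existsP; exists C0; rewrite C0C.
apply/subsetP=> D; rewrite in_desS => /existsP[C /andP[]]; rewrite inE => /orP[CC DC|].
  by rewrite inE in_desS; apply/orP; right; apply/existsP; exists C; rewrite CC.
rewrite in_desS => /existsP[C0 /andP[C0C CC0]] DC.
by rewrite inE in_desS; apply/orP; right; apply/existsP; exists C0; rewrite C0C (des_trans CC0 DC).
Qed.

End ImageDclosed.
End Condensation.

Local Open Scope ring_scope.

Section Network.
Variables (T : finType) (e : rel T) (h : nat) (R : realType).
Local Notation N := (node e h).
Local Notation cap := (@cap T e h R).
Local Notation rho := (rho_star e h R).

Lemma rho_star_ge0 : 0 <= rho.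
Proof. exact: bigmax_ge_id. Qed.

(* Each term of a finite max started at 0 is below the max (the library's
   le_bigmax_cond does not unify with the max of a realType). *)
Lemma le_bigmax0 (I : finType) (P : pred I) (F : I -> R) (j : I) :
  P j -> F j <= \big[Num.max/0]_(i | P i) F i.
Proof.
move=> Pj; rewrite unlock /reducebig.
elim: (index_enum I) (mem_index_enum j) => //= a s IH; rewrite inE => /orP[/eqP<-|js].
  by rewrite Pj /= le_max lexx.
by case: (P a) => /=; rewrite ?le_max IH ?orbT.
Qed.

Lemma mu_le_rho_star (W : {set T}) : W != set0 -> (mu e h W)%:R / (#|W|)%:R <= rho.
Proof. by move=> W0; apply: (le_bigmax0 (fun W : {set T} => (mu e h W)%:R / (#|W|)%:R)). Qed.

Lemma cap_ge0 (u v : N) (c : R) : cap u v = Some c -> 0 <= c.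
Proof.
case: u => [[x|L]|[]]; case: v => [[y|M]|[]] //=; repeat case: ifP => _ //;
  by case=> <-; rewrite ?ler01 ?ler0n ?mulr_ge0 ?ler0n ?rho_star_ge0.
Qed.

Lemma isArcC (u v : N) : isArc u v = isArc v u.
Proof. by case: u => [[x|L]|[]]; case: v => [[y|M]|[]]. Qed.

Lemma nonarc_cap (u v : N) : ~~ isArc u v -> cap u v = Some 0.
Proof.
case: u => [[x|L]|[]]; case: v => [[y|M]|[]] //=.
- by rewrite negb_or => /andP[/negbTE-> /negbTE->].
- by rewrite negb_or => /andP[/negbTE-> _].
Qed.

Lemma sum_node (F : N -> R) :
  \sum_w F w = \sum_x F (vtx e h x) + \sum_L F (lam L) + F (src e h) + F (snk e h).
Proof. by rewrite big_sumType /= big_sumType /= big_bool /= -!addrA. Qed.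

(* Combining the double count with mu(W) <= rho* |W|: for any W, the degrees
   sum to at most the total capacity of the arcs from s to vertices outside W,
   from vertices of W to t, and from vertices of W to the lambdas leaving W. *)
Lemma sum_hdeg_le (W : {set T}) : (0 < h)%N ->
  \sum_x ((hdeg e h x)%:R : R) <=
  \sum_x (if x \in W then h%:R * rho + (#|lambdas_leaving e h W x|)%:R
          else (hdeg e h x)%:R).
Proof.
move=> h_gt0.
pose a x : R := if x \in W then (#|cliques_inside e h W x|)%:R else 0.
pose b x : R := if x \in W then h%:R * rho else 0.
pose c x : R := if x \in W then (#|lambdas_leaving e h W x|)%:R else (hdeg e h x)%:R.
have deg_le : \sum_x (hdeg e h x)%:R <= \sum_x (a x + c x).
  apply: ler_sum => x _; rewrite /a /c; case: ifP => xW; last by rewrite add0r.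
  rewrite -natrD ler_nat; apply: leq_trans (hdeg_inside_leaving e h W x) _.
  by rewrite leq_add2l (cliques_leaving_lambdas e h xW).
have inside_le : \sum_x a x <= \sum_x b x.
  rewrite /a /b -!big_mkcond /= -natr_sum (sum_cliques_inside e h W) sumr_const.
  have [->|W0] := eqVneq W set0; first by rewrite (mu_set0 e h_gt0) muln0 cards0 mulr0n.
  have := mu_le_rho_star W0; rewrite ler_pdivrMr ?ltr0n ?card_gt0 // => muW.
  by rewrite natrM -[_ *+ #|W|]mulr_natr -mulrA; apply: ler_wpM2l muW; exact: ler0n.
have -> : \sum_x (if x \in W then h%:R * rho + (#|lambdas_leaving e h W x|)%:R
                  else (hdeg e h x)%:R) = \sum_x (b x + c x).
  by apply: eq_bigr => x _; rewrite /b /c; case: ifP; rewrite ?add0r.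
move: deg_le inside_le; rewrite !big_split /=; lra.
Qed.

Section FlowFacts.
Variable f : N -> N -> R.
Hypothesis f_flow : is_flow f.
Local Notation r := (resid f).

Lemma flow_antisym (u v : N) : f v u = - f u v.
Proof. by case: f_flow. Qed.

Lemma flow_cap (u v : N) : cap_le (f u v) (cap u v).
Proof. by case: f_flow. Qed.

Lemma flow_nonarc (u v : N) : ~~ isArc u v -> f u v = 0.
Proof.
move=> na; have := flow_cap u v; have := flow_cap v u.
have na' : ~~ isArc v u by rewrite isArcC.
rewrite (nonarc_cap na) (nonarc_cap na') /= flow_antisym; lra.
Qed.

Lemma saturated (u v : N) : ~~ r u v -> exists2 c, cap u v = Some c & f u v = c.
Proof.
rewrite /resid; case: (boolP (isArc u v)) => /= [_|na _].
  have := flow_cap u v; case: (cap u v) => //= c fc /negP nlt; exists c => //.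
  by apply/eqP; rewrite eq_le fc /= leNgt; apply/negP.
by exists 0; [exact: nonarc_cap | exact: flow_nonarc].
Qed.

Lemma saturated_ge0 (u v : N) : ~~ r u v -> 0 <= f u v.
Proof. by case/saturated=> c /cap_ge0 ? ->. Qed.

Lemma resid_lam_member (L : lamT e h) (x : T) : x \in val L -> r (lam L) (vtx e h x).
Proof. by move=> xL; rewrite /resid /= xL. Qed.

Lemma net_outflow (Y : {set N}) : snk e h \notin Y ->
  \sum_(y in Y) \sum_(x in ~: Y) f y x = if src e h \in Y then flow_value f else 0.
Proof.
move=> tY.
have inner0 : \sum_(y in Y) \sum_(w in Y) f y w = 0.
  set S := (X in X = 0); suff : S = - S by lra.
  rewrite {1}/S exchange_big /= -sumrN; apply: eq_bigr => y _.
  by rewrite -sumrN; apply: eq_bigr => w _; rewrite flow_antisym.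
have split_out : \sum_(y in Y) \sum_w f y w =
    \sum_(y in Y) \sum_(w in Y) f y w + \sum_(y in Y) \sum_(x in ~: Y) f y x.
  rewrite -big_split /=; apply: eq_bigr => y _.
  by rewrite (bigID (mem Y)) /=; congr (_ + _); apply: eq_bigl => w; rewrite inE.
rewrite inner0 add0r in split_out; rewrite -split_out.
rewrite (eq_bigr (fun y => if y == src e h then flow_value f else 0)); last first.
  move=> y yY; case: eqP => [->//|/eqP ys].
  have yt : y != snk e h by apply: contraNneq tY => <-.
  by case: f_flow => _ _; apply.
case sY: (src e h \in Y).
  by rewrite (bigD1 (src e h)) //= ?eqxx big1 ?addr0 // => y /andP[_ /negbTE->].
by rewrite big1 // => y yY; case: eqP => // ys; move: sY; rewrite -ys yY.
Qed.

Lemma value_lt_sum_hdeg (x0 : T) : r (src e h) (vtx e h x0) ->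
  flow_value f < \sum_x ((hdeg e h x)%:R : R).
Proof.
move=> rx0; rewrite /flow_value sum_node.
rewrite (flow_nonarc (u := src e h) (v := src e h)) //.
rewrite (flow_nonarc (u := src e h) (v := snk e h)) //.
have -> : \sum_(L : lamT e h) f (src e h) (lam L) = 0 by apply: big1 => L _; apply: flow_nonarc.
rewrite !addr0 (bigD1 x0) //= [X in _ < X](bigD1 x0) //=.
have lt0 : f (src e h) (vtx e h x0) < (hdeg e h x0)%:R by move: rx0; rewrite /resid.
suff : \sum_(i | i != x0) f (src e h) (vtx e h i) <= \sum_(i | i != x0) ((hdeg e h i)%:R : R).
  by lra.
by apply: ler_sum => i _; exact: (flow_cap (src e h) (vtx e h i)).
Qed.

(* A node set Z containing s but not t that no residual arc leaves is a cut
   whose arcs are all saturated; its capacity bounds the degree sum. *)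
Section ClosedCut.
Hypothesis h_gt0 : (0 < h)%N.
Variable Z : {set N}.
Hypothesis Z_src : src e h \in Z.
Hypothesis Z_snk : snk e h \notin Z.
Hypothesis Z_closed : forall z x, z \in Z -> x \notin Z -> ~~ r z x.

Let W : {set T} := [set x | vtx e h x \in Z].

Let cut_flow (z w : N) : R := if w \in Z then 0 else f z w.

Lemma cut_flow_ge0 (z w : N) : z \in Z -> 0 <= cut_flow z w.
Proof.
move=> zZ; rewrite /cut_flow; case: ifPn => [_|wZ]; first exact: lexx.
exact: saturated_ge0 (Z_closed zZ wZ).
Qed.

Lemma sum_cut_flow (z : N) : \sum_(x in ~: Z) f z x = \sum_w cut_flow z w.
Proof. by rewrite big_mkcond /=; apply: eq_bigr => w _; rewrite /cut_flow inE; case: (w \in Z). Qed.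

(* The arcs from s to the vertices outside W are saturated. *)
Lemma cut_flow_src :
  \sum_x (if x \in W then 0 else (hdeg e h x)%:R) <= \sum_w cut_flow (src e h) w.
Proof.
rewrite sum_node.
have := cut_flow_ge0 (src e h) Z_src; have := cut_flow_ge0 (snk e h) Z_src.
have : 0 <= \sum_L cut_flow (src e h) (lam L) by apply: sumr_ge0 => L _; exact: cut_flow_ge0.
suff : \sum_x (if x \in W then 0 else (hdeg e h x)%:R) <=
       \sum_x cut_flow (src e h) (vtx e h x) by lra.
apply: ler_sum => x _; rewrite /cut_flow inE; case: ifPn => // xZ.
by case: (saturated (Z_closed Z_src xZ)) => c /= [<-] ->.
Qed.

(* From a vertex x of W, the arc to t and the unit arcs to the lambdas
   leaving W are saturated; such lambdas lie outside Z, since they have an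
   infinite-capacity arc to a member outside W. *)
Lemma cut_flow_vtx (x : T) : x \in W ->
  h%:R * rho + (#|lambdas_leaving e h W x|)%:R <= \sum_w cut_flow (vtx e h x) w.
Proof.
rewrite inE => xZ; rewrite sum_node.
have := cut_flow_ge0 (src e h) xZ.
have : 0 <= \sum_y cut_flow (vtx e h x) (vtx e h y).
  by apply: sumr_ge0 => y _; exact: cut_flow_ge0.
have -> : cut_flow (vtx e h x) (snk e h) = h%:R * rho.
  by rewrite /cut_flow (negbTE Z_snk); case: (saturated (Z_closed xZ Z_snk)) => c /= [<-].
suff : (#|lambdas_leaving e h W x|)%:R <= \sum_L cut_flow (vtx e h x) (lam L) by lra.
rewrite -sum1_card natr_sum big_mkcond /=; apply: ler_sum => L _.
case: ifP => [|_]; last exact: cut_flow_ge0.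
rewrite inE => /and3P[nLW xL hL].
have LZ : lam L \notin Z.
  apply: contra nLW => LZ; apply/subsetP=> y yL; rewrite inE.
  by apply: contraT => yZ; move: (Z_closed LZ yZ); rewrite resid_lam_member.
rewrite /cut_flow (negbTE LZ).
by case: (saturated (Z_closed xZ LZ)) => c /=; rewrite xL hL => -[<-] ->.
Qed.

Lemma closed_cut_value : \sum_x ((hdeg e h x)%:R : R) <= flow_value f.
Proof.
have := net_outflow Z_snk; rewrite Z_src => <-.
rewrite (eq_bigr (fun z => \sum_w cut_flow z w)) => [|z _]; last exact: sum_cut_flow.
rewrite [X in _ <= X]big_mkcond /= sum_node Z_src (negbTE Z_snk) addr0.
have : 0 <= \sum_L (if lam L \in Z then \sum_w cut_flow (lam L) w else 0).
  by apply: sumr_ge0 => L _; case: ifP => // LZ; apply: sumr_ge0 => w _; exact: cut_flow_ge0.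
have vtx_part : \sum_x (if x \in W then h%:R * rho + (#|lambdas_leaving e h W x|)%:R else 0)
    <= \sum_x (if vtx e h x \in Z then \sum_w cut_flow (vtx e h x) w else 0).
  apply: ler_sum => x _; case: ifP => xW.
    by move: (xW); rewrite inE => ->; exact: cut_flow_vtx.
  by case: ifP => // xZ; apply: sumr_ge0 => w _; exact: cut_flow_ge0.
have := cut_flow_src; have := sum_hdeg_le W h_gt0.
have -> : \sum_x (if x \in W then h%:R * rho + (#|lambdas_leaving e h W x|)%:R
                  else (hdeg e h x)%:R) =
    \sum_x (if x \in W then h%:R * rho + (#|lambdas_leaving e h W x|)%:R else 0) +
    \sum_x (if x \in W then 0 else (hdeg e h x)%:R).
  by rewrite -big_split; apply: eq_bigr => x _ /=; case: (x \in W); rewrite ?addr0 ?add0r.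
lra.
Qed.

End ClosedCut.

(* Else the nodes reachable from s form a closed cut, whose capacity
   sum_v deg(v, h) bounds the flow value from below, while the residual arc
   from s bounds it strictly from above. *)
Lemma src_arc_reaches_snk : (0 < h)%N ->
  forall w, r (src e h) w -> connect r (src e h) (snk e h).
Proof.
move=> h_gt0 w sw; apply: contraT => nst.
have [x0 wx0] : exists x0, w = vtx e h x0 by move: sw; case: w => [[x0|L]|[]] // _; exists x0.
rewrite {}wx0 in sw.
have closed z x : z \in [set y | connect r (src e h) y] ->
    x \notin [set y | connect r (src e h) y] -> ~~ r z x.
  by rewrite !inE => sz; apply: contra => rzx; exact: connect_trans sz (connect1 rzx).
have := closed_cut_value h_gt0 _ _ closed.
rewrite !inE connect0 => /(_ isT nst).
by have := value_lt_sum_hdeg sw; lra.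
Qed.

End FlowFacts.

Section CliqueCover.
Hypothesis h_ge2 : (2 <= h)%N.
Hypothesis vtx_in_clique : forall v : T, exists S : {set T}, hclique e h S && (v \in S).

Lemma hdeg_pos (v : T) : (0 < hdeg e h v)%N.
Proof.
have [S /andP[hS vS]] := vtx_in_clique v; rewrite card_gt0; apply/set0Pn; exists S.
by rewrite inE hS.
Qed.

Lemma rho_star_pos (v : T) : 0 < rho.
Proof.
have [S /andP[hS vS]] := vtx_in_clique v.
have cS : #|S| = h by case/andP: hS => _ /eqP.
have S0 : S != set0 by apply/set0Pn; exists v.
apply: lt_le_trans (mu_le_rho_star S0).
have mu_pos : (0 < mu e h S)%N by rewrite card_gt0; apply/set0Pn; exists S; rewrite inE hS subxx.
by rewrite divr_gt0 ?ltr0n // cS; case: h h_ge2.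
Qed.

Section PathFlow.
Variable v0 : T.
Let eps : R := Num.min 1 (h%:R * rho).
Let sv := src e h.
Let tv := snk e h.
Let xv := vtx e h v0.

Let unit_arc (a b u w : N) : R := if (u == a) && (w == b) then eps else 0.
Let path_flow (u w : N) : R :=
  unit_arc sv xv u w - unit_arc sv xv w u + unit_arc xv tv u w - unit_arc xv tv w u.

Lemma eps_pos : 0 < eps.
Proof. by rewrite lt_min ltr01 mulr_gt0 ?ltr0n ?(rho_star_pos v0) //; case: h h_ge2. Qed.

Lemma unit_arc_ge0 (a b u w : N) : 0 <= unit_arc a b u w.
Proof. by rewrite /unit_arc; case: ifP => // _; exact: ltW eps_pos. Qed.

Lemma sum_unit_arc_out (a b u : N) : \sum_w unit_arc a b u w = if u == a then eps else 0.
Proof.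
rewrite /unit_arc; case: (u == a) => /=; last by rewrite big1.
by rewrite -big_mkcond /= big_pred1_eq.
Qed.

Lemma sum_unit_arc_in (a b u : N) : \sum_w unit_arc a b w u = if u == b then eps else 0.
Proof.
rewrite /unit_arc; case: (u == b) => /=; last by rewrite big1 // => w _; rewrite andbF.
rewrite (eq_bigr (fun w => if w == a then eps else 0)) => [|w _]; last by rewrite andbT.
by rewrite -big_mkcond /= big_pred1_eq.
Qed.

Lemma path_flow_is_flow : is_flow path_flow.
Proof.
split.
- move=> u w.
  have unit0 a b : ~~ ((u == a) && (w == b)) -> unit_arc a b u w = 0.
    by rewrite /unit_arc => /negbTE->.
  have := eps_pos.
  case: (boolP ((u == sv) && (w == xv))) => [/andP[/eqP-> /eqP->]|n1].
    rewrite /path_flow /unit_arc /= !eqxx /=.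
    have : 1 <= (hdeg e h v0)%:R :> R by rewrite ler1n hdeg_pos.
    have : eps <= 1 by rewrite ge_min lexx.
    lra.
  case: (boolP ((u == xv) && (w == tv))) => [/andP[/eqP-> /eqP->]|n2].
    rewrite /path_flow /unit_arc /= !eqxx /=.
    have : eps <= h%:R * rho by rewrite ge_min lexx orbT.
    lra.
  have le0 : path_flow u w <= 0.
    rewrite /path_flow (unit0 _ _ n1) (unit0 _ _ n2).
    have := unit_arc_ge0 sv xv w u; have := unit_arc_ge0 xv tv w u; lra.
  by case E: (cap u w) => [c|] //=; have := cap_ge0 E; lra.
- by move=> u w; rewrite /path_flow; ring.
- move=> u us ut.
  rewrite /path_flow !big_split /= !sumrN !sum_unit_arc_out !sum_unit_arc_in.
  by rewrite -/sv -/tv (negbTE us) (negbTE ut); ring.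
Qed.

Lemma path_flow_value : flow_value path_flow = eps.
Proof.
rewrite /flow_value /path_flow !big_split /= !sumrN !sum_unit_arc_out !sum_unit_arc_in.
by rewrite eqxx /=; ring.
Qed.

End PathFlow.

Section MaxFlow.
Variable f : N -> N -> R.
Hypothesis f_max : is_max_flow f.
Local Notation r := (resid f).

Lemma max_flow_value_pos (v : T) : 0 < flow_value f.
Proof.
case: f_max => _ /(_ _ (path_flow_is_flow v)); rewrite path_flow_value.
exact: lt_le_trans (eps_pos v).
Qed.

(* Else let
   Y be the nodes t does not reach: every arc entering Y is saturated, so the
   flow out of Y along each crossing arc is <= 0.  This contradicts the net
   outflow of Y, which is the positive flow value if s is in Y, and 0 while
   the saturated arc (s, v) contributes -deg(v, h) < 0 otherwise. *)
Lemma snk_reaches_vtx (v : T) : connect r (snk e h) (vtx e h v).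
Proof.
have f_flow : is_flow f by case: f_max.
apply: contraT => nv.
set Y := ~: [set y | connect r (snk e h) y].
have tY : snk e h \notin Y by rewrite !inE negbK connect0.
have vY : vtx e h v \in Y by rewrite !inE.
have entering x y : x \notin Y -> y \in Y -> ~~ r x y.
  rewrite !inE negbK => tx; apply: contra => rxy; exact: connect_trans tx (connect1 rxy).
have crossing_le0 y x : y \in Y -> x \in ~: Y -> f y x <= 0.
  move=> yY; rewrite inE => xY; rewrite (flow_antisym f_flow).
  by have := saturated_ge0 f_flow (entering _ _ xY yY); lra.
have out_le y : y \in Y -> \sum_(x in ~: Y) f y x <= 0.
  by move=> yY; apply: sumr_le0 => x; exact: crossing_le0.
have := net_outflow f_flow tY; case: ifPn => [sY|sY].
  have := max_flow_value_pos v; have : \sum_(y in Y) \sum_(x in ~: Y) f y x <= 0.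
    by apply: sumr_le0 => y; exact: out_le.
  lra.
have fsv : f (src e h) (vtx e h v) = (hdeg e h v)%:R.
  by case: (saturated f_flow (entering _ _ sY vY)) => c /= [<-].
have : \sum_(y in Y) \sum_(x in ~: Y) f y x <= f (vtx e h v) (src e h).
  have sY' : src e h \in ~: Y by rewrite inE.
  rewrite (bigD1 (vtx e h v)) //= (bigD1 (src e h) sY') /=.
  have : \sum_(x in ~: Y | x != src e h) f (vtx e h v) x <= 0.
    by apply: sumr_le0 => x /andP[xY _]; exact: crossing_le0.
  have : \sum_(y in Y | y != vtx e h v) \sum_(x in ~: Y) f y x <= 0.
    by apply: sumr_le0 => y /andP[yY _]; exact: out_le.
  lra.
rewrite (flow_antisym f_flow) fsv => le0 sum0.
have : 1 <= (hdeg e h v)%:R :> R by rewrite ler1n hdeg_pos.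
lra.
Qed.

End MaxFlow.
End CliqueCover.
End Network.

Theorem lemma8 (T : finType) (e : rel T) (h : nat) (R : realType)
    (f : node e h -> node e h -> R) :
  symmetric e -> irreflexive e -> (2 <= h)%N ->
  (forall v : T, exists S : {set T}, hclique e h S && (v \in S)) ->
  is_max_flow f ->
  [/\ forall Cs, independent (resid f) Cs -> dclosed (resid f) (gmap (resid f) Cs),
      forall Cs1 Cs2, independent (resid f) Cs1 -> independent (resid f) Cs2 ->
        gmap (resid f) Cs1 = gmap (resid f) Cs2 -> Cs1 = Cs2 &
      forall Ds, dclosed (resid f) Ds ->
        exists2 Cs, independent (resid f) Cs & gmap (resid f) Cs = Ds].
Proof.
move=> _ _ h_ge2 vtx_in_clique f_max.
have f_flow : is_flow f by case: f_max.
split.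
- move=> Cs; apply: gmap_dclosed.
  + exact: (snk_reaches_vtx h_ge2 vtx_in_clique f_max).
  + exact: (src_arc_reaches_snk f_flow (ltnW h_ge2)).
- exact: gmap_inj.
- exact: dclosed_surj.
Qed.
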